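(* Let $1\le p<\infty$ and let $\mathbf u,\mathbf v$ be bounded sequences of non-zero scalars such that the weighted backward shifts $B_{\mathbf u}$ and $B_{\mathbf v}$ are frequently hypercyclic on $\ell_p(\mathbb Z_+)$. If $\frac{u_1\cdots u_n}{v_1\cdots v_n}$ has a non-zero limit as $n\to\infty$, then $B_{\mathbf u}$ and $B_{\mathbf v}$ have the same frequently hypercyclic vectors.
   Context: $B_{\mathbf w}e_0=0$, $B_{\mathbf w}e_n=w_ne_{n-1}$ on $\ell_p(\mathbb Z_+)$ (real or complex). A vector $x$ is frequently hypercyclic for an operator $T$ if for every non-empty open set $U$, the set $\{n\in\mathbb Z_+: T^nx\in U\}$ has positive lower density; $T$ is frequently hypercyclic if it has such a vector. *)

From HB Require Import structures.
From mathcomp Require Import all_boot all_order all_algebra.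
From mathcomp Require Import all_classical all_reals all_analysis.
From mathcomp Require Import complex.
Set Implicit Arguments. Unset Strict Implicit. Unset Printing Implicit Defensive.
Import Order.TTheory GRing.Theory Num.Theory numFieldNormedType.Exports.
Local Open Scope classical_set_scope.
Local Open Scope ring_scope.

(* Scalars: a field K (K = R or K = R[i]) with its modulus nK : K -> R.
   Sequences on Z_+ are functions nat -> K. *)
Section LpShifts.
Variables (R : realType) (K : numFieldType) (nK : K -> R) (p : R).

Definition in_lp (x : nat -> K) : Prop :=
  cvgn (series (fun n => nK (x n) `^ p)).

Definition lp_norm (x : nat -> K) : R :=
  (limn (series (fun n => nK (x n) `^ p))) `^ (p^-1).

Definition lp_open (U : set (nat -> K)) : Prop :=
  U `<=` in_lp /\
  forall y, U y -> exists2 e : R, 0 < e &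
     forall z, in_lp z -> lp_norm (fun n => z n - y n) < e -> U z.

(* weighted backward shift: B_w e_0 = 0, B_w e_n = w_n e_(n-1),
   i.e. (B_w x)_n = w_(n+1) x_(n+1); w_0 is irrelevant. *)
Definition bshift (w : nat -> K) (x : nat -> K) : nat -> K :=
  fun n => w n.+1 * x n.+1.

Definition count_below (A : set nat) (N : nat) : R :=
  (\sum_(n < N) (`[< A n >] : nat))%:R.

Definition lower_density (A : set nat) : R :=
  limn_inf (fun N : nat => count_below A N / N%:R).

Definition freq_hypercyclic_vector (T : (nat -> K) -> (nat -> K)) (x : nat -> K) : Prop :=
  in_lp x /\
  forall U, lp_open U -> U !=set0 ->
    0 < lower_density [set n | U (iter n T x)].

Definition freq_hypercyclic (T : (nat -> K) -> (nat -> K)) : Prop :=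
  exists x, freq_hypercyclic_vector T x.

Definition admissible_weight (w : nat -> K) : Prop :=
  (exists M : R, forall n, (0 < n)%N -> nK (w n) <= M) /\
  (forall n, (0 < n)%N -> w n != 0).

Definition wprod (w : nat -> K) (n : nat) : K := \prod_(1 <= i < n.+1) w i.

Definition has_nonzero_limit (a : nat -> K) : Prop :=
  exists2 L : K, L != 0 & (fun n => nK (a n - L)) @ \oo --> (0 : R).

Definition prop6p9_statement : Prop :=
  forall u v : nat -> K,
    admissible_weight u -> admissible_weight v ->
    freq_hypercyclic (bshift u) -> freq_hypercyclic (bshift v) ->
    has_nonzero_limit (fun n => wprod u n / wprod v n) ->
    forall x, freq_hypercyclic_vector (bshift u) x <-> freq_hypercyclic_vector (bshift v) x.
End LpShifts.

Definition modR (R : realType) (x : R) : R := `|x|.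
Definition Cscalars (R : realType) : numFieldType := R[i].
Definition modC (R : realType) (z : Cscalars R) : R :=
  complex.ComplexField.Normc.normc (z : R[i]).

From HB Require Import structures.
From mathcomp Require Import all_boot all_order all_algebra.
From mathcomp Require Import all_classical all_reals all_analysis.
From mathcomp Require Import complex ring lra zify.
Set Implicit Arguments. Unset Strict Implicit. Unset Printing Implicit Defensive.
Import Order.TTheory GRing.Theory Num.Theory numFieldNormedType.Exports.
Local Open Scope classical_set_scope.
Local Open Scope ring_scope.

(* Write a_n = (u_1 ... u_n) / (v_1 ... v_n) and b_n = a_n / L, so that b_n -> 1.
   Then (B_u^n x)_k = (b_(k+n) / b_k) (B_v^n x)_k: the fixed invertible diagonal operator
   diag(1 / b_k) followed by diag(b_(k+n)), which tends to the identity uniformly in k.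
   Hence for every non-empty open U there are a non-empty open V and N_0 such that
   B_v^n x in V implies B_u^n x in U for all n >= N_0, so the return times of x to U under
   B_u contain, up to finitely many, its return times to V under B_v.  Replacing b by 1 / b
   gives the converse. *)

Section LowerDensity.
Variable R : realType.

Lemma ler_limn_inf (u v : R^nat) : bounded_fun u -> bounded_fun v ->
  (forall n, u n <= v n) -> limn_inf u <= limn_inf v.
Proof.
move=> bu bv uv.
have cvg_infs (w : R^nat) : bounded_fun w -> cvgn (infs w).
  move=> bw; apply: nondecreasing_is_cvgn; last exact: bounded_fun_has_ubound_infs.
  exact/nondecreasing_infs/bounded_fun_has_lbound.
apply: ler_lim; [exact: cvg_infs|exact: cvg_infs|apply: nearW => n].
apply: lb_le_inf; first by exists (v n); exists n => /=.
move=> _ [k /= nk <-]; apply: le_trans (uv k).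
apply: ge_inf; last by exists k.
exact/has_lbound_sdrop/bounded_fun_has_lbound.
Qed.

Lemma bounded_count_ratio (A : set nat) :
  bounded_fun (fun N : nat => count_below R A N / N%:R).
Proof.
apply/(@ex_bound nat R R^o _ (globally setT)); first exact: (@globally_properfilter nat setT 0%N).
exists 1 => N _ /=; rewrite ger0_norm ?divr_ge0 //.
have [->|N0] := eqVneq N 0%N; first by rewrite invr0 mulr0.
rewrite ler_pdivrMr ?ltr0n ?lt0n // mul1r ler_nat -[X in (_ <= X)%N]card_ord -sum1_card.
by apply: leq_sum => i _; exact: leq_b1.
Qed.

Lemma count_eventually_le (A B : set nat) N0 :
  (forall n, (N0 <= n)%N -> A n -> B n) ->
  forall N, (\sum_(n < N) `[< A n >] <= \sum_(n < N) `[< B n >] + minn N N0)%N.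
Proof.
move=> AB; elim=> [|N IH]; first by rewrite !big_ord0.
rewrite !big_ord_recr /=; move: IH.
move: (\sum_(n < N) `[< A n >])%N (\sum_(n < N) `[< B n >])%N => sA sB IH.
have [N0N|NN0] := leqP N0 N.
  have -> : minn N.+1 N0 = minn N N0 by lia.
  case: (asboolP (A N)) => [/(AB _ N0N) BN|_] /=; last by lia.
  by rewrite asboolT //; lia.
have -> : minn N.+1 N0 = (minn N N0).+1 by lia.
by have := leq_b1 `[< A N >]; lia.
Qed.

Lemma lower_density_eventually_le (A B : set nat) N0 :
  (forall n, (N0 <= n)%N -> A n -> B n) -> lower_density R A <= lower_density R B.
Proof.
move=> AB; pose g N : R := - (N0%:R / N%:R).
have g0 : g n @[n --> \oo] --> 0.
  rewrite -oppr0; apply: cvgN; rewrite -(mulr0 N0%:R); apply: cvgMl_tmp.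
  by rewrite -cvg_shiftS; exact: cvg_harmonic.
have bg : bounded_fun g by apply: cvg_seq_bounded; apply/cvg_ex; exists 0.
have lim_g : limn_inf g = 0.
  by rewrite cvg_limn_infE ?(cvg_lim _ g0) //; apply/cvg_ex; exists 0.
have := le_limn_infD (bounded_count_ratio A) bg.
rewrite lim_g addr0 => /le_trans; apply; apply: ler_limn_inf.
- exact: bounded_funD (bounded_count_ratio A) bg.
- exact: bounded_count_ratio.
move=> N /=; rewrite /g /count_below -mulrBl ler_wpM2r ?invr_ge0 //.
rewrite lerBlDr -natrD ler_nat; apply: leq_trans (count_eventually_le AB N) _.
by rewrite leq_add2l geq_minr.
Qed.

End LowerDensity.

Lemma freq_hypercyclic_vector_eventually (R : realType) (K : numFieldType)
    (nK : K -> R) (p : R) (S T : (nat -> K) -> nat -> K) x :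
  (forall U, lp_open nK p U -> U !=set0 -> exists N0, exists2 V,
     lp_open nK p V /\ V !=set0 &
     forall n, (N0 <= n)%N -> V (iter n T x) -> U (iter n S x)) ->
  freq_hypercyclic_vector nK p T x -> freq_hypercyclic_vector nK p S x.
Proof.
move=> TS [lx Tx]; split=> // U Uo U0.
have [N0 [V [Vo V0] VU]] := TS U Uo U0.
apply: lt_le_trans (Tx V Vo V0) _.
exact: (@lower_density_eventually_le R [set n | V (iter n T x)] _ N0 VU).
Qed.

Section WeightedShift.
Variable K : numFieldType.
Implicit Types u v w z : nat -> K.

Lemma iter_bshift w z n k :
  iter n (bshift w) z k = (\prod_(k.+1 <= i < (k + n).+1) w i) * z (k + n)%N.
Proof.
elim: n k => [|n IH] k /=; first by rewrite addn0 big_geq // mul1r.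
rewrite /bshift IH [in RHS]big_ltn; last by lia.
by rewrite mulrA addSnnS.
Qed.

Lemma prod_nat_neq0 w m l : (forall i, (0 < i)%N -> w i != 0) -> (0 < m)%N ->
  \prod_(m <= i < l) w i != 0.
Proof.
move=> w0 m0; rewrite prodf_seq_neq0; apply/allP => i; rewrite mem_index_iota.
by case/andP=> mi _; apply/implyP => _; apply: w0; exact: leq_trans mi.
Qed.

Lemma iter_bshift_ratio u v z n :
  (forall i, (0 < i)%N -> u i != 0) -> (forall i, (0 < i)%N -> v i != 0) ->
  iter n (bshift u) z =
  (fun k => wprod u (k + n) / wprod v (k + n) / (wprod u k / wprod v k))
    \* iter n (bshift v) z.
Proof.
move=> u0 v0; apply/funext => k /=; rewrite !iter_bshift.
have wprodD w : wprod w (k + n) = wprod w k * \prod_(k.+1 <= i < (k + n).+1) w i.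
  by rewrite /wprod -big_cat_nat // ltnS leq_addr.
rewrite !wprodD; field.
by rewrite !prod_nat_neq0.
Qed.

End WeightedShift.

Section AbsoluteValue.
Variables (R : realType) (K : numFieldType) (nK : K -> R).
Hypotheses (nK_ge0 : forall a, 0 <= nK a) (nK0 : nK 0 = 0) (nK1 : nK 1 = 1)
  (nK_gt0 : forall a, a != 0 -> 0 < nK a) (nKN : forall a, nK (- a) = nK a)
  (nKM : forall a b, nK (a * b) = nK a * nK b)
  (nKD : forall a b, nK (a + b) <= nK a + nK b).

Lemma nKV a : nK a^-1 = (nK a)^-1.
Proof.
have [->|a0] := eqVneq a 0; first by rewrite invr0 nK0 invr0.
have na0 : nK a != 0 by rewrite gt_eqF // nK_gt0.
by apply: (mulfI na0); rewrite -nKM !divff.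
Qed.

Lemma ler_dist_nK a b : `|nK a - nK b| <= nK (a - b).
Proof.
have hab : nK a <= nK (a - b) + nK b by rewrite -{1}(subrK b a) nKD.
have hba : nK b <= nK (a - b) + nK a.
  by rewrite -[a - b]opprB nKN -{1}(subrK a b) nKD.
by rewrite ler_norml; apply/andP; split; lra.
Qed.

Lemma nK_cvg1 (b : nat -> K) :
  nK (b n - 1) @[n --> \oo] --> (0 : R) -> nK (b n) @[n --> \oo] --> (1 : R).
Proof.
move=> /cvgr0Pnorm_le b1; apply/cvgrPdist_le => e /b1; apply: filterS => n.
by rewrite ger0_norm // distrC -nK1; apply: le_trans; exact: ler_dist_nK.
Qed.

Lemma nK_bounded_cvg1 (b : nat -> K) :
  nK (b n - 1) @[n --> \oo] --> (0 : R) -> exists M, forall n, nK (b n) <= M.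
Proof.
move=> /nK_cvg1 b1; have /bounded_fun_has_ubound[M bM] := cvg_seq_bounded (cvgP _ b1).
by exists M => n; apply: bM; exact: imageT.
Qed.

Lemma nK_inv_cvg1 (b : nat -> K) : (forall n, b n != 0) ->
  nK (b n - 1) @[n --> \oo] --> (0 : R) -> nK ((b n)^-1 - 1) @[n --> \oo] --> (0 : R).
Proof.
move=> b0 b1.
have -> : (fun n => nK ((b n)^-1 - 1)) = (fun n => nK (b n - 1) * (nK (b n))^-1).
  apply/funext => n; rewrite -nKV -nKM -nKN; congr nK.
  by field; exact: b0.
rewrite -(mul0r (1 : R)^-1); exact: cvgM b1 (cvgV (oner_neq0 _) (nK_cvg1 b1)).
Qed.

Section Lp.
Variable p : R.
Hypothesis p_gt0 : 0 < p.

Local Notation lp := (in_lp nK p).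

Definition lp_sum (x : nat -> K) : R := limn (series (fun n => nK (x n) `^ p)).

Definition lp_ball (y : nat -> K) (r : R) : set (nat -> K) :=
  [set z | lp z /\ lp_sum (z \- y) < r].

(* [lp_sum] only satisfies the quasi-triangle inequality [lp_sum_sub_le], so the open
   sets used below are interiors of balls rather than balls. *)
Definition lp_interior (S : set (nat -> K)) : set (nat -> K) :=
  [set w | lp w /\ exists2 r, 0 < r & lp_ball w r `<=` S].

Let ler_powRp s t : 0 <= s -> s <= t -> s `^ p <= t `^ p.
Proof.
by move=> s0 st; apply: (ge0_ler_powR (ltW p_gt0)); rewrite ?nnegrE // (le_trans s0).
Qed.

Let powRVK s : 0 <= s -> (s `^ p^-1) `^ p = s.
Proof. by move=> s0; rewrite -powRrM mulVf ?gt_eqF // powRr1. Qed.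

Let powRK s : 0 <= s -> (s `^ p) `^ p^-1 = s.
Proof. by move=> s0; rewrite -powRrM mulfV ?gt_eqF // powRr1. Qed.

Lemma nK_powD_le a b : nK (a + b) `^ p <= 2 `^ p * (nK a `^ p + nK b `^ p).
Proof.
wlog le_ab : a b / nK a <= nK b.
  move=> wl; have [|/ltW] := leP (nK a) (nK b); first exact: wl.
  by move/(wl b a); rewrite addrC (addrC (nK b `^ p)).
apply: (le_trans (ler_powRp (nK_ge0 _) (_ : _ <= 2 * nK b))).
  by apply: le_trans (nKD a b) _; lra.
by rewrite powRM ?ler0n // ler_wpM2l ?powR_ge0 // lerDr powR_ge0.
Qed.

Lemma lp_sum_ge0 x : lp x -> 0 <= lp_sum x.
Proof.
move=> lx; apply: limr_ge lx _; apply: nearW => n.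
by apply: sumr_ge0 => k _; exact: powR_ge0.
Qed.

Lemma lp_sum_subrr x : lp_sum (x \- x) = 0.
Proof.
rewrite /lp_sum; have -> : (fun n => nK ((x \- x) n) `^ p) = fun=> 0.
  by apply/funext => n /=; rewrite subrr nK0 powR0 ?gt_eqF.
have -> : series (fun=> 0 : R) = fun=> 0 by apply/funext => n; rewrite /series /= big1.
exact: lim_cst.
Qed.

Lemma lp_dominated x y z a b : 0 <= a -> 0 <= b -> lp y -> lp z ->
  (forall k, nK (x k) `^ p <= a * nK (y k) `^ p + b * nK (z k) `^ p) ->
  lp x /\ lp_sum x <= a * lp_sum y + b * lp_sum z.
Proof.
move=> a0 b0 ly lz xyz.
pose g := a *: (fun k => nK (y k) `^ p) + b *: (fun k => nK (z k) `^ p).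
have cg : cvgn (series g) by apply: is_cvg_seriesD; exact: is_cvg_seriesZ.
have lx : lp x.
  apply: series_le_cvg cg => k; [exact: powR_ge0| |exact: xyz].
  by apply: addr_ge0; apply: mulr_ge0 => //; exact: powR_ge0.
split=> //; apply: le_trans (lim_series_le lx cg xyz) _.
by rewrite lim_seriesD; [rewrite !lim_seriesZ|exact: is_cvg_seriesZ..].
Qed.

Lemma lp_dmul c x M : (forall k, nK (c k) <= M) -> lp x ->
  lp (c \* x) /\ lp_sum (c \* x) <= M `^ p * lp_sum x.
Proof.
move=> cM lx; have M0 : 0 <= M := le_trans (nK_ge0 _) (cM 0%N).
have := @lp_dominated (c \* x) x x (M `^ p) 0 (powR_ge0 _ _) (lexx _) lx lx.
rewrite mul0r addr0; apply=> k; rewrite mul0r addr0 /= nKM powRM //.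
by rewrite ler_wpM2r ?powR_ge0 // ler_powRp.
Qed.

Lemma lp_sub x y : lp x -> lp y -> lp (x \- y).
Proof.
move=> lx ly.
have [] // := lp_dominated (x := x \- y) (powR_ge0 2 p) (powR_ge0 2 p) lx ly.
by move=> k; rewrite -mulrDr -(nKN (y k)); exact: nK_powD_le.
Qed.

Lemma lp_sum_sub_le x y z : lp (x \- y) -> lp (y \- z) ->
  lp_sum (x \- z) <= 2 `^ p * (lp_sum (x \- y) + lp_sum (y \- z)).
Proof.
move=> lxy lyz; rewrite mulrDr.
apply: (proj2 (lp_dominated (powR_ge0 _ _) (powR_ge0 _ _) lxy lyz _)) => k.
have -> : (x \- z) k = (x k - y k) + (y k - z k) by rewrite addrA subrK.
by rewrite -mulrDr; exact: nK_powD_le.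
Qed.

Lemma lp_norm_ltE x e : lp x -> 0 < e -> (lp_norm nK p x < e) = (lp_sum x < e `^ p).
Proof.
move=> lx e0; rewrite /lp_norm -/(lp_sum x); have s0 := lp_sum_ge0 lx.
have pV0 : 0 < p^-1 by rewrite invr_gt0.
apply/idP/idP => h.
- rewrite -(powRVK s0); apply: gt0_ltr_powR => //; rewrite nnegrE ?powR_ge0 //.
  exact: ltW.
- rewrite -[e](powRK (ltW e0)); apply: gt0_ltr_powR => //; rewrite nnegrE //.
  exact: powR_ge0.
Qed.

Lemma lp_openP U : lp_open nK p U <->
  U `<=` lp /\ forall y, U y -> exists2 r, 0 < r & lp_ball y r `<=` U.
Proof.
split=> -[Ulp Uball]; split=> // y Uy; have ly := Ulp _ Uy.
- have [e e0 eU] := Uball y Uy; exists (e `^ p); first exact: powR_gt0.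
  by move=> z [lz zy]; apply: eU; rewrite // lp_norm_ltE //; exact: lp_sub.
- have [r r0 rU] := Uball y Uy; exists (r `^ p^-1); first exact: powR_gt0.
  move=> z lz; rewrite lp_norm_ltE ?powR_gt0 ?powRVK ?(ltW r0) //; last exact: lp_sub.
  by move=> zy; exact: rU.
Qed.

Lemma lp_interior_sub S : lp_interior S `<=` S.
Proof. by move=> w [lw [r r0]]; apply; split; rewrite ?lp_sum_subrr. Qed.

Lemma lp_open_interior S : lp_open nK p (lp_interior S).
Proof.
apply/lp_openP; split=> [w []//|w [lw [r r0 rS]]].
set d := r / (2 * 2 `^ p).
have d0 : 0 < d by rewrite divr_gt0 // mulr_gt0 // powR_gt0.
have rE : r = 2 `^ p * (d + d) by rewrite /d; field; rewrite gt_eqF ?powR_gt0.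
exists d => // z [lz zw]; split=> //; exists d => // z' [lz' z'z].
apply: rS; split=> //; rewrite rE.
apply: le_lt_trans (lp_sum_sub_le (lp_sub lz' lz) (lp_sub lz lw)) _.
by rewrite ltr_pM2l ?powR_gt0 // ltrD.
Qed.

Lemma lp_ball_dmul_near1 y0 E : lp y0 -> 0 < E ->
  exists2 d, 0 < d & exists2 m, 0 < m & forall c y,
    (forall k, nK (c k - 1) <= m) -> lp_ball y0 d y -> lp_ball y0 E (c \* y).
Proof.
move=> ly0 E0; have S0 := lp_sum_ge0 ly0.
have q0 : 0 < 2 `^ p by rewrite powR_gt0.
set t := E / (2 * 2 `^ p * (lp_sum y0 + 1)).
have t0 : 0 < t by rewrite divr_gt0 // !mulr_gt0 // ltr_wpDl.
exists (E / (2 * 2 `^ p * 2 `^ p)); first by rewrite divr_gt0 // !mulr_gt0.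
exists (Num.min 1 (t `^ p^-1)); first by rewrite lt_min ltr01 powR_gt0.
move=> c y cm [ly yd].
have cm1 k : nK (c k - 1) <= 1 by apply: le_trans (cm k) _; rewrite ge_min lexx.
have c2 k : nK (c k) <= 2.
  by rewrite -[c k](subrK 1) (le_trans (nKD _ _)) // nK1 lerD2r cm1.
have cmp k : nK (c k - 1) `^ p <= t.
  by rewrite -(powRVK (ltW t0)) ler_powRp // (le_trans (cm k)) // ge_min lexx orbT.
split; first exact: (lp_dmul c2 ly).1.
have dom k : nK ((c \* y \- y0) k) `^ p <=
    2 `^ p * 2 `^ p * nK ((y \- y0) k) `^ p + 2 `^ p * t * nK (y0 k) `^ p.
  have -> : (c \* y \- y0) k = c k * (y k - y0 k) + (c k - 1) * y0 k by rewrite /=; ring.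
  apply: le_trans (nK_powD_le _ _) _.
  rewrite -[2 `^ p * 2 `^ p * _]mulrA -[2 `^ p * t * _]mulrA -mulrDr ler_wpM2l ?(ltW q0) //.
  rewrite !nKM !powRM ?nK_ge0 //; apply: lerD; apply: ler_wpM2r; rewrite ?powR_ge0 //.
  by rewrite ler_powRp.
have [_] := lp_dominated (mulr_ge0 (ltW q0) (ltW q0)) (mulr_ge0 (ltW q0) (ltW t0))
  (lp_sub ly ly0) ly0 dom.
move/le_lt_trans; apply.
have h1 : 2 `^ p * 2 `^ p * lp_sum (y \- y0) < E / 2.
  have -> : E / 2 = 2 `^ p * 2 `^ p * (E / (2 * 2 `^ p * 2 `^ p)).
    by field; rewrite gt_eqF.
  by rewrite ltr_pM2l ?mulr_gt0.
have h2 : 2 `^ p * t * lp_sum y0 <= E / 2.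
  have -> : E / 2 = 2 `^ p * t * (lp_sum y0 + 1).
    by rewrite /t; field; rewrite !gt_eqF // ltr_wpDl.
  by apply: ler_wpM2l; [rewrite mulr_ge0 // ltW | rewrite lerDl].
lra.
Qed.

Lemma freq_hypercyclic_vector_transfer (S T : (nat -> K) -> nat -> K) (b : nat -> K) x :
  (forall k, b k != 0) -> nK (b n - 1) @[n --> \oo] --> (0 : R) ->
  (forall n z, iter n S z = (fun k => b (k + n)%N / b k) \* iter n T z) ->
  freq_hypercyclic_vector nK p T x -> freq_hypercyclic_vector nK p S x.
Proof.
move=> b0 b1 ST; apply: freq_hypercyclic_vector_eventually => U /lp_openP[Ulp Uball] [y0 Uy0].
have ly0 := Ulp _ Uy0; have [E E0 EU] := Uball y0 Uy0.
have [d d0 [m m0 near1]] := lp_ball_dmul_near1 ly0 E0.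
have [M bM] := nK_bounded_cvg1 b1.
have [Mi biM] := nK_bounded_cvg1 (nK_inv_cvg1 b0 b1).
have [N0 _ bN0] := proj1 (cvgr0Pnorm_le _) b1 m m0.
pose bi k := (b k)^-1.
exists N0, (lp_interior [set w | lp_ball y0 d (bi \* w)]); first split.
- exact: lp_open_interior.
- have Mi0 : 0 < Mi `^ p + 1 by rewrite ltr_wpDl ?powR_ge0.
  exists (b \* y0); split; first exact: (lp_dmul bM ly0).1.
  exists (d / (Mi `^ p + 1)); first exact: divr_gt0.
  move=> z [lz zd]; split; first exact: (lp_dmul biM lz).1.
  have -> : bi \* z \- y0 = bi \* (z \- b \* y0).
    by apply/funext => k /=; rewrite /bi; field; exact: b0.
  have lzb : lp (z \- b \* y0) by apply: lp_sub lz (lp_dmul bM ly0).1.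
  have [_ /le_lt_trans] := lp_dmul biM lzb; apply.
  apply: le_lt_trans (_ : _ <= (Mi `^ p + 1) * lp_sum (z \- b \* y0)) _.
    by apply: ler_wpM2r; rewrite ?lp_sum_ge0 ?lerDl.
  by rewrite mulrC -ltr_pdivlMr.
move=> n nN0 /lp_interior_sub Vw; apply: EU; rewrite ST.
have -> : (fun k => b (k + n)%N / b k) \* iter n T x =
    (fun k => b (k + n)%N) \* (bi \* iter n T x) by apply/funext => k /=; rewrite mulrA.
apply: near1 Vw => k; have := bN0 (k + n)%N; rewrite /= ger0_norm //; apply.
by rewrite /= (leq_trans nN0) ?leq_addl.
Qed.

Lemma freq_hypercyclic_vector_iff (S T : (nat -> K) -> nat -> K) (a : nat -> K) x :
  (forall k, a k != 0) -> has_nonzero_limit nK a ->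
  (forall n z, iter n S z = (fun k => a (k + n)%N / a k) \* iter n T z) ->
  freq_hypercyclic_vector nK p S x <-> freq_hypercyclic_vector nK p T x.
Proof.
move=> a0 [L L0 aL] ST; pose b k := a k / L.
have b0 k : b k != 0 by rewrite mulf_neq0 ?invr_eq0.
have b1 : nK (b n - 1) @[n --> \oo] --> (0 : R).
  have -> : (fun n => nK (b n - 1)) = (fun n => nK (a n - L) * (nK L)^-1).
    by apply/funext => n; rewrite -nKV -nKM; congr nK; rewrite /b; field.
  by rewrite -(mul0r (nK L)^-1); exact: cvgMl aL.
have STb n z : iter n S z = (fun k => b (k + n)%N / b k) \* iter n T z.
  by rewrite ST; apply/funext => k /=; rewrite /b; field; rewrite L0 !a0.
split; last exact: freq_hypercyclic_vector_transfer STb.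
apply: (@freq_hypercyclic_vector_transfer _ _ (fun k => (b k)^-1)).
- by move=> k; rewrite invr_eq0.
- exact: nK_inv_cvg1.
by move=> n z; rewrite STb; apply/funext => k /=; field; rewrite !b0.
Qed.

Lemma prop6p9_statement_of_absolute_value : prop6p9_statement nK p.
Proof.
move=> u v [_ u0] [_ v0] _ _ uv x.
apply: freq_hypercyclic_vector_iff uv _ => [k|n z].
  by rewrite mulf_neq0 ?invr_eq0 ?prod_nat_neq0.
exact: iter_bshift_ratio.
Qed.

End Lp.
End AbsoluteValue.

Theorem proposition6p9 (R : realType) (p : R) (hp : 1 <= p) :
  prop6p9_statement (modR (R:=R)) p /\
  prop6p9_statement (@modC R) p.
Proof.
have p_gt0 : 0 < p := lt_le_trans ltr01 hp.
split; apply: (@prop6p9_statement_of_absolute_value _ _ _ _ _ _ _ _ _ _ p p_gt0); rewrite /modR /modC.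
- exact: normr_ge0.
- exact: normr0.
- exact: normr1.
- by move=> a; rewrite normr_gt0.
- exact: normrN.
- exact: normrM.
- exact: ler_normD.
- by move=> [a b]; rewrite /ComplexField.Normc.normc sqrtr_ge0.
- exact: ComplexField.Normc.normc0.
- exact: ComplexField.Normc.normc1.
- move=> a a0; rewrite lt_neqAle eq_sym; apply/andP; split.
    by apply/eqP => /ComplexField.Normc.eq0_normc a_eq0; rewrite a_eq0 eqxx in a0.
  by case: a {a0} => x y; rewrite /ComplexField.Normc.normc sqrtr_ge0.
- exact: normcN.
- exact: ComplexField.Normc.normcM.
- exact: le_normcD.
Qed.
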